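(* Let $\iota:\emptyset\to\{\bullet\}$; let $m:\{a\}\to\{a,b\}$ be the inclusion of a point into the two-point antidiscrete space; let $\sigma:S\to\{\bullet\}$ be the map from the Sierpinski space $S=\{o,c\}$ (open sets $\emptyset,\{o\},S$) to a point; and let $e:\{a,b\}\to\{\bullet\}$ be the map from the two-point antidiscrete space to a point. Then, in $\mathrm{Top}$, $\{\iota\}^{lrrrr}=\{m,\sigma\}^l=\{e\}^{lr}$, and this is the class of surjective continuous maps $p:A\to B$ such that the topology on $A$ is induced from $B$ (every open subset of $A$ has the form $p^{-1}(V)$ with $V\subseteq B$ open).
   Context: For continuous maps $f:A\to B$, $g:C\to D$, $f\pitchfork g$ means: for all continuous $t:A\to C$, $b:B\to D$ with $g\circ t=b\circ f$ there is continuous $d:B\to C$ with $d\circ f=t$, $g\circ d=b$. For a class $P$, $P^l=\{f: f\pitchfork g\ \forall g\in P\}$, $P^r=\{g: f\pitchfork g\ \forall f\in P\}$; for a word $w$ in $l,r$, $P^w$ applies these operations from left to right. *)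

From HB Require Import structures.
From mathcomp Require Import all_boot all_order.
From mathcomp Require Import all_classical all_reals all_analysis.

Set Implicit Arguments.
Unset Strict Implicit.
Unset Printing Implicit Defensive.

Local Open Scope classical_set_scope.

Definition mclass := forall (A B : topologicalType), (A -> B) -> Prop.

Definition lifts (A B C D : topologicalType) (f : A -> B) (g : C -> D) : Prop :=
  forall (t : A -> C) (b : B -> D), continuous t -> continuous b ->
    g \o t = b \o f ->
    exists d : B -> C, [/\ continuous d, d \o f = t & g \o d = b].

(** P^l and P^r (morphisms of Top, i.e. continuous maps) *)
Definition lcl (P : mclass) : mclass := fun A B f =>
  continuous f /\
  forall (C D : topologicalType) (g : C -> D), continuous g -> P C D g -> lifts f g.

Definition rcl (P : mclass) : mclass := fun C D g =>
  continuous g /\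
  forall (A B : topologicalType) (f : A -> B), continuous f -> P A B f -> lifts f g.

Definition sing (X Y : topologicalType) (h : X -> Y) : mclass := fun A B f =>
  existT (fun AB : topologicalType * topologicalType => AB.1 -> AB.2) (A, B) f =
  existT (fun AB : topologicalType * topologicalType => AB.1 -> AB.2) (X, Y) h.

Definition pair_cl (X1 Y1 X2 Y2 : topologicalType) (h1 : X1 -> Y1) (h2 : X2 -> Y2)
  : mclass := fun A B f => sing h1 f \/ sing h2 f.

Definition emptysp := void.
HB.instance Definition _ := Choice.on emptysp.
Definition empty_open : set_system emptysp := fun _ => True.
Lemma empty_opT : empty_open setT. Proof. by []. Qed.
Lemma empty_opI : setI_closed empty_open. Proof. by []. Qed.
Lemma empty_op_bigU (I : Type) (f : I -> set emptysp) :
  (forall i, empty_open (f i)) -> empty_open (\bigcup_i f i).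
Proof. by []. Qed.
HB.instance Definition _ :=
  isOpenTopological.Build emptysp empty_opT empty_opI empty_op_bigU.

Definition pointsp := unit.
HB.instance Definition _ := Choice.on pointsp.
Definition point_open : set_system pointsp := fun U => U = set0 \/ U = setT.
Lemma point_opT : point_open setT. Proof. by right. Qed.
Lemma point_opI : setI_closed point_open.
Proof.
move=> U V [->|->] [->|->]; rewrite ?set0I ?setI0 ?setIT ?setTI;
  first [by left|by right].
Qed.
Lemma point_op_bigU (I : Type) (f : I -> set pointsp) :
  (forall i, point_open (f i)) -> point_open (\bigcup_i f i).
Proof.
move=> fo; have [[i fi]|nT] := pselect (exists i, f i = setT).
  by right; apply/seteqP; split=> // x _; exists i => //; rewrite fi.
left; apply/seteqP; split=> // x [i _ fx]; case: (fo i) => fiE.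
  by move: fx; rewrite fiE.
by exfalso; apply: nT; exists i.
Qed.
HB.instance Definition _ :=
  isOpenTopological.Build pointsp point_opT point_opI point_op_bigU.

(* the two-point antidiscrete space {a, b}, with a := true, b := false *)
Definition antidisc2 := bool.
HB.instance Definition _ := Choice.on antidisc2.
Definition anti_open : set_system antidisc2 := fun U => U = set0 \/ U = setT.
Lemma anti_opT : anti_open setT. Proof. by right. Qed.
Lemma anti_opI : setI_closed anti_open.
Proof.
move=> U V [->|->] [->|->]; rewrite ?set0I ?setI0 ?setIT ?setTI;
  first [by left|by right].
Qed.
Lemma anti_op_bigU (I : Type) (f : I -> set antidisc2) :
  (forall i, anti_open (f i)) -> anti_open (\bigcup_i f i).
Proof.
move=> fo; have [[i fi]|nT] := pselect (exists i, f i = setT).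
  by right; apply/seteqP; split=> // x _; exists i => //; rewrite fi.
left; apply/seteqP; split=> // x [i _ fx]; case: (fo i) => fiE.
  by move: fx; rewrite fiE.
by exfalso; apply: nT; exists i.
Qed.
HB.instance Definition _ :=
  isOpenTopological.Build antidisc2 anti_opT anti_opI anti_op_bigU.

Definition pointa := unit.
HB.instance Definition _ := Choice.on pointa.
Definition pointa_open : set_system pointa := fun U => U = set0 \/ U = setT.
Lemma pointa_opT : pointa_open setT. Proof. by right. Qed.
Lemma pointa_opI : setI_closed pointa_open.
Proof.
move=> U V [->|->] [->|->]; rewrite ?set0I ?setI0 ?setIT ?setTI;
  first [by left|by right].
Qed.
Lemma pointa_op_bigU (I : Type) (f : I -> set pointa) :
  (forall i, pointa_open (f i)) -> pointa_open (\bigcup_i f i).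
Proof.
move=> fo; have [[i fi]|nT] := pselect (exists i, f i = setT).
  by right; apply/seteqP; split=> // x _; exists i => //; rewrite fi.
left; apply/seteqP; split=> // x [i _ fx]; case: (fo i) => fiE.
  by move: fx; rewrite fiE.
by exfalso; apply: nT; exists i.
Qed.
HB.instance Definition _ :=
  isOpenTopological.Build pointa pointa_opT pointa_opI pointa_op_bigU.

(* the Sierpinski space S = {o, c}, with o := true, c := false;
   open sets: set0, [set o], setT *)
Definition sierp := bool.
HB.instance Definition _ := Choice.on sierp.
Definition sierp_open : set_system sierp :=
  fun U => [\/ U = set0, U = [set true] | U = setT].
Lemma sierp_opT : sierp_open setT. Proof. by apply: Or33. Qed.
Lemma sierp_opI : setI_closed sierp_open.
Proof.
move=> U V [->|->|->] [->|->|->]; rewrite ?set0I ?setI0 ?setIT ?setTI ?setIid;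
  first [by apply: Or31|by apply: Or32|by apply: Or33].
Qed.
Lemma sierp_op_bigU (I : Type) (f : I -> set sierp) :
  (forall i, sierp_open (f i)) -> sierp_open (\bigcup_i f i).
Proof.
move=> fo; have [[i fi]|nT] := pselect (exists i, f i = setT).
  by apply: Or33; apply/seteqP; split=> // x _; exists i => //; rewrite fi.
have [[i fi]|nO] := pselect (exists i, f i = [set true]).
  apply: Or32; apply/seteqP; split=> x.
    case=> j _ fjx; case: (fo j) => fjE; move: fjx; rewrite fjE //.
    by move=> _; exfalso; apply: nT; exists j.
  by move=> ->; exists i => //; rewrite fi.
apply: Or31; apply/seteqP; split=> // x [j _ fjx]; case: (fo j) => fjE.
- by move: fjx; rewrite fjE.
- by exfalso; apply: nO; exists j.
- by exfalso; apply: nT; exists j.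
Qed.
HB.instance Definition _ :=
  isOpenTopological.Build sierp sierp_opT sierp_opI sierp_op_bigU.

Definition iota_map : emptysp -> pointsp := fun v => match v with end.
Definition m_incl : pointa -> antidisc2 := fun _ => true.
Definition sigma : sierp -> pointsp := fun _ => tt.
Definition e_map : antidisc2 -> pointsp := fun _ => tt.

Definition induced_surj : mclass := fun A B p =>
  [/\ continuous p, (forall y : B, exists x : A, p x = y) &
      forall U : set A, open U -> exists V : set B, open V /\ U = p @^-1` V].

From mathcomp Require Import all_boot all_order.
From mathcomp Require Import all_classical all_reals all_analysis.

(* A map f lifts against e : {a,b} -> {•} iff it is injective: the indicator
   of a point of A extends along f only if f separates that point from the
   others.  The maps g with the right lifting property against all continuous
   injections are the surjections inducing the topology: lifting against
   the empty map into a point gives surjectivity, and lifting against the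
   identity of C onto C carrying the topology induced by g : C -> D shows that
   this induced topology is the original one.

   Starting from iota, {iota}^l consists of the maps with empty codomain
   whenever the domain is empty.  A map with nonempty domain that lies in both
   {iota}^l and {iota}^lr lifts against itself, hence is a homeomorphism, and
   the empty maps are in {iota}^lr; so {iota}^lrr is the class of maps with a
   continuous section, whose right class is again the continuous injections
   (test against the discrete two-point space over a point).  Finally m
   detects surjectivity, and sigma detects induced open sets through their
   indicators into the Sierpinski space. *)

Set Implicit Arguments.
Unset Strict Implicit.
Unset Printing Implicit Defensive.

Local Open Scope classical_set_scope.

Definition inj_cl : mclass := fun A B f => continuous f /\ injective f.

Definition split_epi_cl : mclass := fun A B f =>
  continuous f /\ exists s : B -> A, continuous s /\ cancel s f.

Lemma id_continuous (T : topologicalType) : continuous (@id T).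
Proof. by move=> x; apply: cvg_id. Qed.

Lemma comp_continuous (X Y Z : topologicalType) (f : X -> Y) (g : Y -> Z) :
  continuous f -> continuous g -> continuous (g \o f).
Proof. by move=> cf cg x; apply: continuous_comp; [exact: cf|exact: cg]. Qed.

Lemma void_continuous (X Y : topologicalType) (h : X -> Y) :
  (X -> False) -> continuous h.
Proof. by move=> nX x; case: (nX x). Qed.

Lemma sing_lifts (A B X Y C D : topologicalType) (f : A -> B) (h : X -> Y)
    (g : C -> D) :
  sing h g -> lifts f h -> lifts f g.
Proof.
pose Q (z : {XY : topologicalType * topologicalType & XY.1 -> XY.2}) :=
  lifts f (projT2 z).
move=> hg; change (Q (existT _ (X, Y) h) -> Q (existT _ (C, D) g)).
by rewrite -hg.
Qed.

Lemma lcl_singE (X Y A B : topologicalType) (h : X -> Y) (f : A -> B) :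
  continuous h -> lcl (sing h) f <-> continuous f /\ lifts f h.
Proof.
move=> ch; split=> [[cf fh]|[cf fh]]; first by split=> //; exact: fh.
by split=> // C D g _ /sing_lifts; apply.
Qed.

Lemma lcl_pairE (X1 Y1 X2 Y2 A B : topologicalType) (h1 : X1 -> Y1)
    (h2 : X2 -> Y2) (f : A -> B) :
  continuous h1 -> continuous h2 ->
  lcl (pair_cl h1 h2) f <-> [/\ continuous f, lifts f h1 & lifts f h2].
Proof.
move=> ch1 ch2; split=> [[cf fh]|[cf fh1 fh2]].
  by split=> //; apply: fh => //; [left|right].
by split=> // C D g _ [/sing_lifts|/sing_lifts]; apply.
Qed.

Lemma eq_rcl (P Q : mclass) :
  (forall (A B : topologicalType) (f : A -> B), P A B f <-> Q A B f) ->
  forall (C D : topologicalType) (g : C -> D), rcl P g <-> rcl Q g.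
Proof.
by move=> PQ C D g; split=> -[cg gP]; split=> // A B f cf /PQ; apply: gP.
Qed.

Lemma liftsP (A B C D : topologicalType) (f : A -> B) (g : C -> D) :
  lifts f g <->
  forall (t : A -> C) (b : B -> D), continuous t -> continuous b ->
    (forall a, g (t a) = b (f a)) ->
    exists d : B -> C,
      [/\ continuous d, forall a, d (f a) = t a & forall y, g (d y) = b y].
Proof.
split=> fg t b ct cb /funeqP gtbf.
  by have [d [cd /funeqP df /funeqP gd]] := fg t b ct cb gtbf; exists d.
by have [d [cd df gd]] := fg t b ct cb gtbf; exists d; split=> //; apply/funeqP.
Qed.

Section Lifting.

Variables (A B C D : topologicalType) (f : A -> B) (g : C -> D).

Lemma lifts_of_self_lifts : lifts f f -> lifts f g.
Proof.
move=> /liftsP ff; apply/liftsP => t b ct cb gtbf.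
have [r [cr rf fr]] :=
  ff id id (@id_continuous _) (@id_continuous _) (fun=> erefl).
exists (t \o r); split=> [|a|y] /=; first exact: comp_continuous.
  by rewrite rf.
by rewrite gtbf fr.
Qed.

Lemma empty_lifts_split : (A -> False) -> split_epi_cl g -> lifts f g.
Proof.
move=> nA [_ [s [cs sK]]]; apply/liftsP => t b _ cb _.
exists (s \o b); split=> [|a|y] /=; first exact: comp_continuous.
  by case: (nA a).
by rewrite sK.
Qed.

Lemma split_epi_lifts_inj : split_epi_cl f -> injective g -> lifts f g.
Proof.
move=> [_ [s [cs sK]]] ginj; apply/liftsP => t b ct cb gtbf.
exists (t \o s); split=> [|a|y] /=; first exact: comp_continuous.
  by apply: ginj; rewrite !gtbf sK.
by rewrite gtbf sK.
Qed.

Lemma inj_lifts_induced_surj : injective f -> induced_surj g -> lifts f g.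
Proof.
move=> finj [cg gsurj ginduced]; apply/liftsP => t b ct cb gtbf.
have dP y : exists c, g c = b y /\ forall a, f a = y -> c = t a.
  have [[a <-]|nfy] := pselect (exists a, f a = y).
    by exists (t a); split=> [|a' /finj ->].
  have [c gc] := gsurj (b y); exists c; split=> // a fay.
  by case: nfy; exists a.
have [d /all_and2[gd df]] := choice dP.
exists d; split=> // [|a]; last exact: df.
apply/continuousP => U oU; have [V [oV ->]] := ginduced U oU.
have -> : d @^-1` (g @^-1` V) = b @^-1` V.
  by apply/seteqP; split=> y /=; rewrite gd.
by move/continuousP: cb; apply.
Qed.

End Lifting.

Lemma antidisc2_continuous (X : topologicalType) (h : X -> antidisc2) :
  continuous h.
Proof.
apply/continuousP => U [->|->]; first by rewrite preimage_set0; exact: open0.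
by rewrite preimage_setT; exact: openT.
Qed.

Lemma open_sierp_true : open ([set true] : set sierp).
Proof. exact: Or32. Qed.

Lemma sierp_indicator_continuous (X : topologicalType) (V : set X) :
  open V -> continuous (fun x => `[< V x >] : sierp).
Proof.
move=> oV; apply/continuousP => U [->|->|->].
- by rewrite preimage_set0; exact: open0.
- suff -> : (fun x => `[< V x >] : sierp) @^-1` [set true] = V by [].
  by apply/seteqP; split=> x /asboolP.
- by rewrite preimage_setT; exact: openT.
Qed.

Lemma lcl_iotaE (A B : topologicalType) (f : A -> B) :
  lcl (sing iota_map) f <-> continuous f /\ ((A -> False) -> B -> False).
Proof.
rewrite lcl_singE; last by case.
split=> -[cf fP]; split=> //.
  move=> nA y; move/liftsP: fP => fP.
  have [d _] := fP (fun a => match nA a with end) (fun=> tt)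
    (void_continuous nA) (@cst_continuous _ _ _) (fun a => match nA a with end).
  by case: (d y).
apply/liftsP => t b _ _ _.
have nB := fP (fun a => match t a with end).
exists (fun y => match nB y with end); split=> [|a|y].
- exact: void_continuous.
- by case: (t a).
- by case: (nB y).
Qed.

Lemma void_rcl_lcl_iota (X Y : topologicalType) (h : X -> Y) :
  (X -> False) -> rcl (lcl (sing iota_map)) h.
Proof.
move=> nX; split; first exact: void_continuous.
move=> A B f _ /lcl_iotaE[_ fP]; apply/liftsP => t b _ _ _.
have nB := fP (fun a => nX (t a)).
exists (fun y => match nB y with end); split=> [|a|y].
- exact: void_continuous.
- by case: (nX (t a)).
- by case: (nB y).
Qed.

Lemma rcl_rcl_lcl_iotaE (C D : topologicalType) (g : C -> D) :
  rcl (rcl (lcl (sing iota_map))) g <-> split_epi_cl g.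
Proof.
split=> [[cg gP]|[cg gsplit]].
  split=> //; have nv : emptysp -> False := @of_void False.
  have /liftsP emg := gP emptysp D (@of_void D) (void_continuous nv)
    (void_rcl_lcl_iota _ nv).
  have [s [cs _ gs]] := emg (@of_void C) id (void_continuous nv)
    (@id_continuous _) (fun v => match v with end).
  by exists s.
split=> // A B f cf [_ fP].
have [[a0]|nA] := pselect (inhabited A); last first.
  by apply: empty_lifts_split => // a; apply: nA.
have Lf : lcl (sing iota_map) f by apply/lcl_iotaE; split=> // /(_ a0).
by apply/lifts_of_self_lifts/(fP _ _ f).
Qed.

Lemma rcl_split_epiE (C D : topologicalType) (g : C -> D) :
  rcl split_epi_cl g <-> inj_cl g.
Proof.
split=> [[cg gP]|[cg ginj]]; last first.
  by split=> // A B f _ fsplit; apply: split_epi_lifts_inj.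
split=> // c1 c2 gc12.
pose f (x : bool) : pointsp := tt.
have fsplit : split_epi_cl f.
  split; first exact: cst_continuous.
  by exists (fun=> true); split=> [|[]]; first exact: cst_continuous.
have /liftsP fg := gP _ _ f (@cst_continuous _ _ _) fsplit.
pose t (x : bool) := if x then c1 else c2.
have ct : continuous t by apply/continuousP => U _; exact: discrete_open.
have gt x : g (t x) = g c1 by case: x.
have [d [_ df _]] := fg t (fun=> g c1) ct (@cst_continuous _ _ _) gt.
by rewrite -[c1](df true) -[c2](df false).
Qed.

Lemma lcl_e_mapE (A B : topologicalType) (f : A -> B) :
  lcl (sing e_map) f <-> inj_cl f.
Proof.
rewrite lcl_singE; last exact: cst_continuous.
split=> -[cf fe]; split=> //.
  move=> a1 a2 fa12; move/liftsP: fe => fe.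
  pose t a : antidisc2 := `[< a = a1 >].
  have [d [_ df _]] := fe t (fun=> tt) (@antidisc2_continuous _ _)
    (@cst_continuous _ _ _) (fun=> erefl).
  by apply/esym/asboolP; rewrite -/(t a2) -df -fa12 df; apply/asboolP.
apply/liftsP => t b _ _ _.
exists (fun y => `[< exists2 a, f a = y & t a >] : antidisc2).
split=> [|a|y]; [exact: antidisc2_continuous| |by case: (b y)].
apply/idP/idP => [/asboolP[a' /fe <-]//|ta].
by apply/asboolP; exists a.
Qed.

Lemma rcl_inj_surjective (C D : topologicalType) (g : C -> D) :
  rcl inj_cl g -> forall y, exists x, g x = y.
Proof.
move=> [_ gP] y.
have nv : emptysp -> False := @of_void False.
have iota_inj : inj_cl iota_map by split; case.
have /liftsP iota_g := gP _ _ _ iota_inj.1 iota_inj.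
have [d [_ _ gd]] := iota_g (@of_void C) (fun=> y)
  (void_continuous nv) (@cst_continuous _ _ _) (fun v => match v with end).
by exists (d tt).
Qed.

Lemma rcl_inj_induced (C D : topologicalType) (g : C -> D) (U : set C) :
  rcl inj_cl g -> open U -> exists V, open V /\ U = g @^-1` V.
Proof.
move=> [cg gP] oU.
pose to_induced (x : C) : initial_topology g := x.
have cind : continuous to_induced by apply: continuous_comp_initial.
have /liftsP := gP _ _ _ cind (conj cind (fun _ _ => id)).
move=> /(_ id g (@id_continuous _) (@initial_continuous _ _ g) (fun=> erefl)).
case=> d [/continuousP cd dE _].
have [V oV gVU] := cd U oU.
exists V; split=> //; rewrite gVU; apply/seteqP; split=> x /=; by rewrite dE.
Qed.

Lemma rcl_inj_clE (C D : topologicalType) (g : C -> D) :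
  rcl inj_cl g <-> induced_surj g.
Proof.
split=> [gP|gP]; first split.
- exact: gP.1.
- exact: rcl_inj_surjective.
- by move=> U; apply: rcl_inj_induced.
split; first by case: gP.
by move=> A B f _ [_ finj]; apply: inj_lifts_induced_surj.
Qed.

Lemma lifts_m_inclE (A B : topologicalType) (f : A -> B) :
  lifts f m_incl <-> forall y, exists x, f x = y.
Proof.
split=> [/liftsP fm y|fsurj].
  apply: contrapT => nfy.
  pose b z : antidisc2 := `[< z <> y >].
  have mtbf a : m_incl tt = b (f a).
    by apply/esym/asboolP => fay; apply: nfy; exists a.
  have [d [_ _ /(_ y) md]] := fm (fun=> tt) b (@cst_continuous _ _ _)
    (@antidisc2_continuous _ _) mtbf.
  by move/esym/asboolP: md.
apply/liftsP => t b _ _ mtbf.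
exists (fun=> tt); split=> [|a|y]; first exact: cst_continuous.
  by case: (t a).
by have [a <-] := fsurj y; rewrite -mtbf.
Qed.

Lemma lifts_sigmaE (A B : topologicalType) (f : A -> B) :
  lifts f sigma <-> forall U, open U -> exists V, open V /\ U = f @^-1` V.
Proof.
split=> [/liftsP fs U oU|finduced].
  have [d [cd df _]] := fs _ (fun=> tt) (sierp_indicator_continuous oU)
    (@cst_continuous _ _ _) (fun=> erefl).
  exists (d @^-1` [set true]); split.
    by move/continuousP: cd; apply; exact: open_sierp_true.
  by apply/seteqP; split=> a /=; rewrite df => /asboolP.
apply/liftsP => t b ct _ _.
have [V [oV tV]] := finduced _ (proj1 (continuousP t) ct _ open_sierp_true).
exists (fun y => `[< V y >] : sierp); split=> [|a|y].
- exact: sierp_indicator_continuous.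
- have : (t @^-1` [set true]) a = V (f a) by rewrite tV.
  by move=> /= <-; exact: asboolb.
- by case: (b y).
Qed.

Lemma lcl_m_sigmaE (A B : topologicalType) (f : A -> B) :
  lcl (pair_cl m_incl sigma) f <-> induced_surj f.
Proof.
rewrite lcl_pairE; try exact: cst_continuous.
split=> [[cf /lifts_m_inclE fsurj /lifts_sigmaE finduced]//|].
move=> [cf fsurj finduced].
by split=> //; [apply/lifts_m_inclE | apply/lifts_sigmaE].
Qed.

Theorem mainTheorem19 :
  forall (A B : topologicalType) (p : A -> B),
    (rcl (rcl (rcl (rcl (lcl (sing iota_map))))) p <-> lcl (pair_cl m_incl sigma) p) /\
    (lcl (pair_cl m_incl sigma) p <-> rcl (lcl (sing e_map)) p) /\
    (rcl (lcl (sing e_map)) p <-> induced_surj p).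
Proof.
move=> A B p.
have iota_lrrrr : rcl (rcl (rcl (rcl (lcl (sing iota_map))))) p <-> induced_surj p.
  rewrite -rcl_inj_clE; apply: eq_rcl => C D g.
  by rewrite -rcl_split_epiE; apply: eq_rcl; exact: rcl_rcl_lcl_iotaE.
have e_lr : rcl (lcl (sing e_map)) p <-> induced_surj p.
  by rewrite -rcl_inj_clE; apply: eq_rcl; exact: lcl_e_mapE.
by rewrite iota_lrrrr e_lr lcl_m_sigmaE.
Qed.
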